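(* Let $n\ge2$. Among sets $K\in\mathcal S_n\setminus\{\emptyset,\mathbb R^n\}$, the unit balls $B(x,1)$, $x\in\mathbb R^n$, are the only ones with no $c$-extremal points.
   Context: $B(x,r)$ is the closed Euclidean ball. For $A\subseteq\mathbb R^n$, $A^c=\bigcap_{x\in A}B(x,1)$ (with $\emptyset^c=\mathbb R^n$), and $\mathrm{conv}_c(A)=A^{cc}$ is its $c$-hull. $\mathcal S_n$ is the class of all sets of the form $\bigcap_{x\in A}B(x,1)$, $A\subseteq\mathbb R^n$. For $K\in\mathcal S_n$, a point $x\in K$ is $c$-extremal for $K$ if whenever $x\in\mathrm{conv}_c(\{y,z\})$ with $y,z\in K$, then $y=x$ or $z=x$. *)

From mathcomp Require Import all_boot all_order all_algebra.
From mathcomp Require Import classical_sets reals.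
Set Implicit Arguments. Unset Strict Implicit. Unset Printing Implicit Defensive.
Import Order.TTheory GRing.Theory Num.Theory.
Local Open Scope ring_scope.
Local Open Scope classical_set_scope.

Definition sqdist (R : realType) (n : nat) (x y : 'rV[R]_n) : R :=
  \sum_(i < n) (x ord0 i - y ord0 i) ^+ 2.

Definition ball1 (R : realType) (n : nat) (x : 'rV[R]_n) : set 'rV[R]_n :=
  [set y | sqdist x y <= 1].

(* A^c = intersection of B(x,1) over x in A; empty intersection = R^n *)
Definition cdual (R : realType) (n : nat) (A : set 'rV[R]_n) : set 'rV[R]_n :=
  [set y | forall x, A x -> ball1 x y].

Definition chull (R : realType) (n : nat) (A : set 'rV[R]_n) : set 'rV[R]_n :=
  cdual (cdual A).

Definition in_Sn (R : realType) (n : nat) (K : set 'rV[R]_n) : Prop :=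
  exists A : set 'rV[R]_n, K = cdual A.

Definition c_extremal (R : realType) (n : nat) (K : set 'rV[R]_n) (x : 'rV[R]_n) : Prop :=
  K x /\ forall y z, K y -> K z -> chull [set y; z] x -> y = x \/ z = x.

(* A ball B(x0,1) has no c-extremal point when n >= 2: for p in it, let m be
   the midpoint of [x0, p] and y, z = m +- d with d orthogonal to p - x0 and
   |d|^2 = 1 - |p - x0|^2 / 4, so that y, z lie on the unit sphere around x0.
   Apollonius' identity, applied to m as midpoint of [y, z] and of [x0, p],
   shows that every unit ball containing y and z contains p.
   Conversely, write K = A^c.
   If A contains a != b, K is compact and a point p of K farthest from
   q = (a + b) / 2 is c-extremal: were p in the c-hull of y, z in K \ {p},
   a unit ball centred on the ray from p through q, just far enough beyond q
   to exclude p, would still contain y and z, as these are no farther from q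
   than p is and lie at positive distance from p. *)

From mathcomp Require Import all_boot all_order all_algebra.
From mathcomp Require Import all_classical all_reals all_analysis ring lra.
Set Implicit Arguments. Unset Strict Implicit. Unset Printing Implicit Defensive.
Import Order.TTheory GRing.Theory Num.Theory.
Import numFieldNormedType.Exports.
Local Open Scope classical_set_scope.
Local Open Scope ring_scope.

Lemma exists_overshoot (R : rcfType) (r m : R) : 0 < r -> r < 1 -> 0 < m ->
  exists2 t, 1 <= t & 1 < t ^+ 2 * r <= 1 + (t - 1) * m.
Proof.
move=> r0 r1 m0; set s := Num.sqrt r.
have s2 : s ^+ 2 = r by rewrite sqr_sqrtr // ltW.
have s0 : 0 < s by rewrite sqrtr_gt0.
have s1 : s < 1 by nra.
set e := Num.min 1 ((1 - s) * m / 3).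
have e0 : 0 < e by rewrite lt_min ltr01 divr_gt0 // mulr_gt0 // subr_gt0.
have e1 : e <= 1 by rewrite ge_min lexx.
have em : 3 * e <= (1 - s) * m.
  by rewrite -ler_pdivlMl // mulrC ge_min lexx orbT.
exists ((1 + e) / s).
  by rewrite ler_pdivlMr // mul1r; lra.
have ts : (1 + e) / s * s = 1 + e by rewrite divfK ?gt_eqF.
have t1 : 1 - s <= (1 + e) / s - 1 by nra.
rewrite -s2 -exprMn ts.
apply/andP; split; nra.
Qed.

Section Euclid.
Variables (R : realType) (n : nat).
Implicit Types (A : set 'rV[R]_n) (a b d m p u v w x y z : 'rV[R]_n).

Definition dotv u v : R := \sum_i u ord0 i * v ord0 i.

Lemma dotvC u v : dotv u v = dotv v u.
Proof. by apply: eq_bigr => i _; rewrite mulrC. Qed.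

Lemma dotvZl k u v : dotv (k *: u) v = k * dotv u v.
Proof.
by rewrite /dotv mulr_sumr; apply: eq_bigr => i _; rewrite mxE mulrA.
Qed.

Lemma dotvZr k u v : dotv u (k *: v) = k * dotv u v.
Proof. by rewrite dotvC dotvZl dotvC. Qed.

Lemma sqdist_ge0 x y : 0 <= sqdist x y.
Proof. by apply: sumr_ge0 => i _; rewrite sqr_ge0. Qed.

Lemma sqdistC x y : sqdist x y = sqdist y x.
Proof. by apply: eq_bigr => i _; rewrite -sqrrN opprB. Qed.

Lemma sqdistE x y : sqdist x y = dotv (x - y) (x - y).
Proof. by apply: eq_bigr => i _; rewrite !mxE expr2. Qed.

Lemma sqdistxx x : sqdist x x = 0.
Proof. by rewrite sqdistE subrr /dotv big1 // => i _; rewrite mxE mul0r. Qed.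

Lemma sqdist_gt0 x y : x != y -> 0 < sqdist x y.
Proof.
move=> xy; rewrite lt_def sqdist_ge0 andbT; apply: contraNneq xy.
move/eqP; rewrite psumr_eq0 => [/allP xy|i _]; last exact: sqr_ge0.
apply/eqP/rowP => i; apply/eqP; rewrite -subr_eq0 -sqrf_eq0.
exact: xy (mem_index_enum _).
Qed.

Lemma sqdist_eq0 x y : (sqdist x y == 0) = (x == y).
Proof.
apply/idP/idP => [|/eqP->]; last by rewrite sqdistxx.
by apply: contraLR => /sqdist_gt0/gt_eqF->.
Qed.

Lemma dotv_gt0 u : u != 0 -> 0 < dotv u u.
Proof. by move/sqdist_gt0; rewrite sqdistE subr0. Qed.

Lemma sqdist_lincomb w x y t :
  sqdist w (t *: x + (1 - t) *: y) =
  t * sqdist w x + (1 - t) * sqdist w y - t * (1 - t) * sqdist x y.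
Proof.
rewrite /sqdist !mulr_sumr -big_split -sumrB /=.
by apply: eq_bigr => i _; rewrite !mxE; ring.
Qed.

Lemma sqdist_midpoint w x y :
  sqdist w (2^-1 *: (x + y)) = (sqdist w x + sqdist w y) / 2 - sqdist x y / 4.
Proof.
have half : 1 - 2^-1 = 2^-1 :> R by field.
by rewrite scalerDr -{2}half sqdist_lincomb half; field.
Qed.

Lemma sqdist_addr x m d :
  sqdist x (m + d) = sqdist x m - 2 * dotv (x - m) d + dotv d d.
Proof.
rewrite /sqdist /dotv mulr_sumr -sumrB -big_split /=.
by apply: eq_bigr => i _; rewrite !mxE; ring.
Qed.

Lemma sqdist_subr x m d :
  sqdist x (m - d) = sqdist x m + 2 * dotv (x - m) d + dotv d d.
Proof.
rewrite /sqdist /dotv mulr_sumr -!big_split /=.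
by apply: eq_bigr => i _; rewrite !mxE; ring.
Qed.

Lemma sqdist_addr_subr m d : sqdist (m + d) (m - d) = 4 * dotv d d.
Proof.
by rewrite /sqdist /dotv mulr_sumr; apply: eq_bigr => i _; rewrite !mxE; ring.
Qed.

Lemma exists_orthogonal (hn : (2 <= n)%N) u : exists2 v, v != 0 & dotv u v = 0.
Proof.
pose i0 : 'I_n := Ordinal (ltnW hn); pose i1 : 'I_n := Ordinal hn.
have i10 : i1 != i0 by [].
pose v := \row_i
  (if i == i0 then - u ord0 i1 else if i == i1 then u ord0 i0 else 0).
have [v0|vn0] := eqVneq v 0; last first.
  exists v => //; rewrite /dotv (bigD1 i0) // (bigD1 i1) //=.
  rewrite big1 => [|i /andP[]].
    by rewrite !mxE eqxx (negbTE i10) eqxx; ring.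
  by rewrite mxE => /negbTE -> /negbTE ->; rewrite mulr0.
have u0 : u ord0 i0 = 0.
  by have := congr1 (fun w => w ord0 i1) v0; rewrite !mxE (negbTE i10) eqxx.
exists (delta_mx 0 i0).
  by apply: contra_neq (@oner_neq0 R) => /rowP/(_ i0); rewrite !mxE eqxx.
rewrite /dotv (bigD1 i0) //= big1 => [|i /negbTE i0i]; rewrite mxE.
  by rewrite u0 mul0r addr0.
by rewrite i0i andbF mulr0.
Qed.

Lemma exists_orthogonal_sqnorm (hn : (2 <= n)%N) u s : 0 <= s ->
  exists d, dotv u d = 0 /\ dotv d d = s.
Proof.
move=> s0; have [v v0 uv] := exists_orthogonal hn u.
have N0 := dotv_gt0 v0.
exists (Num.sqrt (s / dotv v v) *: v); rewrite dotvZr uv mulr0; split => //.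
rewrite dotvZl dotvZr mulrA -expr2 sqr_sqrtr ?divfK ?gt_eqF //.
exact: divr_ge0 s0 (ltW N0).
Qed.

Lemma ball1_no_c_extremal (hn : (2 <= n)%N) x0 p : ~ c_extremal (ball1 x0) p.
Proof.
move=> [Bp ext]; rewrite /ball1 /= in Bp; set W := sqdist x0 p in Bp.
pose m := 2^-1 *: (x0 + p).
have [d [x0d dd]] :=
  exists_orthogonal_sqnorm hn (x0 - m) (s := 1 - W / 4) ltac:(lra).
have pd : dotv (p - m) d = 0.
  rewrite (_ : p - m = -1 *: (x0 - m)) ?dotvZl ?x0d ?mulr0 //.
  by apply/rowP => i; rewrite !mxE; field.
have x0m : sqdist x0 m = W / 4 by rewrite sqdist_midpoint sqdistxx -/W; field.
have pm : sqdist p m = W / 4.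
  by rewrite sqdist_midpoint sqdistxx sqdistC -/W; field.
set y := m + d; set z := m - d.
have By : ball1 x0 y by rewrite /ball1 /= sqdist_addr x0d x0m dd; lra.
have Bz : ball1 x0 z by rewrite /ball1 /= sqdist_subr x0d x0m dd; lra.
have yp : y <> p.
  by move=> yp; have := sqdistxx p; rewrite -{2}yp sqdist_addr pd pm dd; lra.
have zp : z <> p.
  by move=> zp; have := sqdistxx p; rewrite -{2}zp sqdist_subr pd pm dd; lra.
have hull : chull [set y; z] p.
  move=> c yzc; rewrite /ball1 /=.
  have cy : sqdist c y <= 1 by rewrite sqdistC; apply: yzc; left.
  have cz : sqdist c z <= 1 by rewrite sqdistC; apply: yzc; right.
  have myz : m = 2^-1 *: (y + z) by apply/rowP => i; rewrite !mxE; field.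
  have := sqdist_midpoint c y z; rewrite -myz sqdist_addr_subr dd.
  have := sqdist_midpoint c x0 p; rewrite -/m -/W.
  have := sqdist_ge0 c x0; lra.
by case: (ext y z By Bz hull).
Qed.

Lemma continuous_sqdist x : continuous (sqdist x).
Proof.
apply: continuous_big => [|i _]; first exact: add_continuous.
have coord : continuous (fun y : 'rV[R]_n => x ord0 i - y ord0 i).
  move=> y; apply: continuousB; first exact: cst_continuous.
  exact: coord_continuous.
under eq_fun do rewrite expr2.
by move=> y; exact: continuousM (coord y) (coord y).
Qed.

Lemma closed_cdual A : closed (cdual A).
Proof.
rewrite (_ : cdual A = \bigcap_(a in A) ball1 a); last first.
  by apply/seteqP; split => y /= Ay a Aa; exact: Ay.
apply: closed_bigI => a _.
apply: (@preimage_closed _ _ (sqdist a) [set r | r <= 1]) => [y _|].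
  exact: continuous_sqdist.
exact: closed_le.
Qed.

Lemma compact_cdual A a : A a -> compact (cdual A).
Proof.
move=> Aa; pose box i := `[a ord0 i - 1, a ord0 i + 1]%classic.
have box_compact : compact [set v : 'rV[R]_n | forall i, box i (v ord0 i)].
  by apply: rV_compact => i; exact: segment_compact.
apply: (subclosed_compact (@closed_cdual A) box_compact).
move=> y /(_ a Aa) ay i; rewrite /box /= in_itv /=.
have : (a ord0 i - y ord0 i) ^+ 2 <= 1.
  apply: le_trans ay; rewrite /sqdist (bigD1 i) //= lerDl.
  by apply: sumr_ge0 => j _; exact: sqr_ge0.
by move=> h; apply/andP; split; nra.
Qed.

Lemma cdual_has_c_extremal A a b :
  A a -> A b -> a != b -> cdual A !=set0 -> exists p, c_extremal (cdual A) p.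
Proof.
move=> Aa Ab ab K0; set K := cdual A in K0 *.
pose q := 2^-1 *: (a + b).
have Kq y : K y -> sqdist y q <= 1 - sqdist a b / 4.
  move=> Ky; have := Ky a Aa; have := Ky b Ab; rewrite /ball1 /= => yb ya.
  rewrite sqdist_midpoint !(sqdistC y); lra.
have [p /[1!inE] Kp pmax] := EVT_max_rV K0 (compact_cdual Aa)
  (continuous_subspaceT (@continuous_sqdist q)).
have {}pmax y : K y -> sqdist q y <= sqdist q p.
  by move=> Ky; apply: pmax; rewrite inE.
exists p; split => // y z Ky Kz hull.
have [->|yp] := eqVneq y p; first by left.
have [->|zp] := eqVneq z p; first by right.
exfalso; set r := sqdist q p in pmax.
have r1 : r < 1.
  by have := Kq p Kp; have := sqdist_gt0 ab; rewrite (sqdistC p) -/r; lra.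
have r0 : 0 < r.
  rewrite lt_def sqdist_ge0 andbT sqdist_eq0; apply: contra yp => /eqP qp.
  have := pmax y Ky; rewrite /r -qp sqdistxx => qy.
  by rewrite -sqdist_eq0 sqdistC eq_le qy sqdist_ge0.
set m := Num.min (sqdist p y) (sqdist p z).
have m0 : 0 < m by rewrite lt_min !sqdist_gt0 // eq_sym.
have [t t1 /andP[tr tm]] := exists_overshoot r0 r1 m0.
pose c := t *: q + (1 - t) *: p.
have Kc w : K w -> m <= sqdist p w -> sqdist w c <= 1.
  move=> Kw mw; have := pmax w Kw.
  by rewrite sqdist_lincomb (sqdistC w q) (sqdistC w p) -/r; nra.
have := hull c.
rewrite /ball1 /= sqdistC sqdist_lincomb sqdistxx (sqdistC p) -/r.
suff /[swap]/[apply] : cdual [set y; z] c by nra.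
by move=> w [->|->]; apply: Kc; rewrite // ge_min lexx ?orbT.
Qed.

Lemma cdual_set0 : cdual set0 = [set: 'rV[R]_n].
Proof. by apply/seteqP; split => // y _ x. Qed.

Lemma cdual_set1 a : cdual [set a] = ball1 a.
Proof. by apply/seteqP; split => [y /(_ a erefl)|y ay _ ->]. Qed.

End Euclid.

Theorem theorem4p5 (R : realType) (n : nat) (hn : (2 <= n)%N)
  (K : set 'rV[R]_n) (hK : in_Sn K) (hne : K <> set0) (hnT : K <> setT) :
  (forall x, ~ c_extremal K x) <-> (exists x : 'rV[R]_n, K = ball1 x).
Proof.
split=> [noext|[x ->] p]; last exact: ball1_no_c_extremal.
have [A KA] := hK; subst K.
have [a Aa] : A !=set0.
  by apply/set0P/eqP => A0; apply: hnT; rewrite A0 cdual_set0.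
have [[b Ab ba]|single] := pselect (exists2 b, A b & b != a).
  have K0 : cdual A !=set0 by apply/set0P/eqP.
  by have [p /noext] := cdual_has_c_extremal Ab Aa ba K0.
exists a; rewrite -cdual_set1; congr cdual.
apply/seteqP; split=> [x Ax|x ->] //=.
by apply: contrapT => xa; apply: single; exists x => //; apply/eqP.
Qed.
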